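(* Let $c>0$, $\theta_k>0$, $T_{\rm TDMA}>0$ and $0<\tau_k^{\max}<T_{\rm TDMA}$ be constants, and let $\varepsilon(\tau)=e^{-c\tau}$. Consider the problem (P6) $$\min_{\tau_k}\ \tau_k-\frac{1}{\theta_k}\log\!\left(1-\varepsilon(\tau_k)e^{\theta_k T_{\rm TDMA}}\right)\quad\text{s.t.}\quad 0\le\tau_k\le\tau_k^{\max}.$$ Then the optimal transmission time is $$\tau_k^{\rm opt}=\min\left(\tau_k^{\max},\ \widetilde\tau_k\right),\qquad\text{where}\qquad \widetilde\tau_k=\frac{1}{c}\log\!\left(1+\frac{c}{\theta_k}\right)+\frac{\theta_k}{c}T_{\rm TDMA}.$$
   Context: Setting: source $k$ in a TDMA system with frame length $T_{\rm TDMA}$ is allocated transmission time $\tau_k$ per frame; a transmission fails with probability $\varepsilon(\tau_k)=e^{-c\tau_k}$, and $\theta_k$ is the AoI exponent. The objective is considered on the set where it is defined, i.e. where $\varepsilon(\tau_k)e^{\theta_k T_{\rm TDMA}}<1$ (the condition for the moment generating function of the peak age to exist). *)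

From Stdlib Require Import Reals.
Open Scope R_scope.

Definition eps (c tau : R) : R := exp (- c * tau).

Definition obj (c theta T tau : R) : R :=
  tau - (1 / theta) * ln (1 - eps c tau * exp (theta * T)).

(* Feasible set of (P6), restricted to where the objective is defined
   (eps(tau) e^{theta T} < 1). *)
Definition feasible (c theta T taumax tau : R) : Prop :=
  0 <= tau /\ tau <= taumax /\ eps c tau * exp (theta * T) < 1.

Definition tau_tilde (c theta T : R) : R :=
  (1 / c) * ln (1 + c / theta) + (theta / c) * T.

(* Minimising [obj] amounts to maximising [h = exp (- theta * obj)], which is
   [e^(-theta tau) - e^(theta T) e^(-(theta + c) tau)].  Its derivative
   [theta e^(-theta tau) (e^(c (tau_tilde - tau)) - 1)] changes sign exactly at
   [tau_tilde], so [h] is strictly unimodal with peak [tau_tilde], and its unique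
   maximiser on [[0, taumax] ∩ {h > 0}] is [min taumax tau_tilde]. *)
From Stdlib Require Import Reals Lra.
From Coquelicot Require Import Coquelicot.
Open Scope R_scope.

Lemma derive_pos_strict_incr (f f' : R -> R) (a b : R) :
  (forall x, derivable_pt_lim f x (f' x)) -> a < b ->
  (forall x, a < x < b -> 0 < f' x) -> f a < f b.
Proof.
  intros hf hab hpos.
  destruct (MVT_cor2 f f' a b hab (fun x _ => hf x)) as [z [hz hzab]].
  specialize (hpos z hzab). nra.
Qed.

Lemma derive_neg_strict_decr (f f' : R -> R) (a b : R) :
  (forall x, derivable_pt_lim f x (f' x)) -> a < b ->
  (forall x, a < x < b -> f' x < 0) -> f b < f a.
Proof.
  intros hf hab hneg.
  destruct (MVT_cor2 f f' a b hab (fun x _ => hf x)) as [z [hz hzab]].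
  specialize (hneg z hzab). nra.
Qed.

Lemma unimodal_argmax_le (g : R -> R) (m hi x : R) :
  (forall a b, a < b <= m -> g a < g b) ->
  (forall a b, m <= a < b -> g b < g a) ->
  x <= hi -> x = Rmin hi m \/ g x < g (Rmin hi m).
Proof.
  intros hincr hdecr hx. unfold Rmin. destruct (Rle_dec hi m) as [him | him].
  - destruct (Req_dec x hi) as [-> | hne]; [now left | right].
    apply hincr; lra.
  - destruct (Rtotal_order x m) as [hxm | [-> | hxm]]; [right | now left | right].
    + apply hincr; lra.
    + apply hdecr; lra.
Qed.

Lemma tau_tilde_pos (c theta T : R) :
  0 < c -> 0 < theta -> 0 <= T -> 0 < tau_tilde c theta T.
Proof.
  intros hc htheta hT. unfold tau_tilde.
  assert (hln : 0 < ln (1 + c / theta)).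
  { rewrite <- ln_1. apply ln_increasing; [lra |].
    assert (0 < c / theta) by (apply Rdiv_lt_0_compat; lra). lra. }
  assert (0 < 1 / c) by (apply Rdiv_lt_0_compat; lra).
  assert (0 < theta / c) by (apply Rdiv_lt_0_compat; lra).
  nra.
Qed.

Lemma exp_tau_tilde (c theta T : R) : 0 < c -> 0 < theta ->
  theta * exp (c * tau_tilde c theta T) = (theta + c) * exp (theta * T).
Proof.
  intros hc htheta. unfold tau_tilde.
  replace (c * (1 / c * ln (1 + c / theta) + theta / c * T))
    with (ln (1 + c / theta) + theta * T) by (field; lra).
  rewrite exp_plus, exp_ln.
  - field. lra.
  - assert (0 < c / theta) by (apply Rdiv_lt_0_compat; lra). lra.
Qed.

Definition exp_neg_obj (c theta T tau : R) : R :=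
  exp (- theta * tau) - exp (theta * T) * exp (- (theta + c) * tau).

Lemma exp_neg_objE (c theta T tau : R) :
  exp_neg_obj c theta T tau = exp (- theta * tau) * (1 - eps c tau * exp (theta * T)).
Proof.
  unfold exp_neg_obj, eps.
  replace (- (theta + c) * tau) with (- theta * tau + - c * tau) by ring.
  rewrite exp_plus. ring.
Qed.

Lemma exp_neg_obj_pos (c theta T tau : R) :
  0 < exp_neg_obj c theta T tau <-> eps c tau * exp (theta * T) < 1.
Proof.
  rewrite exp_neg_objE. pose proof (exp_pos (- theta * tau)).
  split; intro h; nra.
Qed.

Lemma obj_ln_exp_neg_obj (c theta T tau : R) : 0 < theta ->
  eps c tau * exp (theta * T) < 1 ->
  obj c theta T tau = - (1 / theta) * ln (exp_neg_obj c theta T tau).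
Proof.
  intros htheta hdom. unfold obj. rewrite exp_neg_objE, ln_mult, ln_exp.
  - field. lra.
  - apply exp_pos.
  - lra.
Qed.

Lemma obj_lt_of_exp_neg_obj_lt (c theta T a b : R) : 0 < theta ->
  0 < exp_neg_obj c theta T a -> exp_neg_obj c theta T a < exp_neg_obj c theta T b ->
  obj c theta T b < obj c theta T a.
Proof.
  intros htheta ha hab.
  assert (hb : 0 < exp_neg_obj c theta T b) by lra.
  rewrite !obj_ln_exp_neg_obj by (try apply exp_neg_obj_pos; assumption).
  assert (ln (exp_neg_obj c theta T a) < ln (exp_neg_obj c theta T b))
    by (apply ln_increasing; lra).
  assert (0 < 1 / theta) by (apply Rdiv_lt_0_compat; lra).
  nra.
Qed.

Lemma exp_neg_obj_derive (c theta T x : R) : 0 < c -> 0 < theta ->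
  derivable_pt_lim (exp_neg_obj c theta T) x
    (theta * exp (- theta * x) * (exp (c * (tau_tilde c theta T - x)) - 1)).
Proof.
  intros hc htheta. apply is_derive_Reals. unfold exp_neg_obj.
  auto_derive; [exact I |].
  replace (c * (tau_tilde c theta T - x)) with (c * tau_tilde c theta T + - c * x) by ring.
  replace (- (theta + c) * x) with (- theta * x + - c * x) by ring.
  rewrite !exp_plus.
  replace (theta * exp (- theta * x) * (exp (c * tau_tilde c theta T) * exp (- c * x) - 1))
    with ((theta * exp (c * tau_tilde c theta T)) * exp (- theta * x) * exp (- c * x)
          - theta * exp (- theta * x)) by ring.
  rewrite exp_tau_tilde by assumption. ring.
Qed.

Lemma exp_neg_obj_strict_incr (c theta T a b : R) : 0 < c -> 0 < theta ->
  a < b <= tau_tilde c theta T -> exp_neg_obj c theta T a < exp_neg_obj c theta T b.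
Proof.
  intros hc htheta [hab hb].
  apply (derive_pos_strict_incr _ _ a b (fun x => exp_neg_obj_derive c theta T x hc htheta) hab).
  intros x hx.
  assert (1 < exp (c * (tau_tilde c theta T - x))).
  { rewrite <- exp_0. apply exp_increasing. nra. }
  pose proof (exp_pos (- theta * x)).
  apply Rmult_lt_0_compat; [apply Rmult_lt_0_compat |]; lra.
Qed.

Lemma exp_neg_obj_strict_decr (c theta T a b : R) : 0 < c -> 0 < theta ->
  tau_tilde c theta T <= a < b -> exp_neg_obj c theta T b < exp_neg_obj c theta T a.
Proof.
  intros hc htheta [ha hab].
  apply (derive_neg_strict_decr _ _ a b (fun x => exp_neg_obj_derive c theta T x hc htheta) hab).
  intros x hx.
  assert (exp (c * (tau_tilde c theta T - x)) < 1).
  { rewrite <- exp_0. apply exp_increasing. nra. }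
  pose proof (exp_pos (- theta * x)).
  assert (0 < theta * exp (- theta * x)) by (apply Rmult_lt_0_compat; lra).
  nra.
Qed.

Theorem theorem2 (c theta T taumax : R)
  (hc : 0 < c) (htheta : 0 < theta) (hT : 0 < T)
  (htmax0 : 0 < taumax) (htmaxT : taumax < T)
  (hnonempty : eps c taumax * exp (theta * T) < 1) :
  let tauopt := Rmin taumax (tau_tilde c theta T) in
  feasible c theta T taumax tauopt /\
  (forall tau, feasible c theta T taumax tau ->
     obj c theta T tauopt <= obj c theta T tau) /\
  (forall tau, feasible c theta T taumax tau ->
     obj c theta T tau <= obj c theta T tauopt -> tau = tauopt).
Proof.
  intros tauopt.
  assert (hpeak : forall tau, tau <= taumax ->
            tau = tauopt \/ exp_neg_obj c theta T tau < exp_neg_obj c theta T tauopt).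
  { intros tau. apply unimodal_argmax_le.
    - intros a b. now apply exp_neg_obj_strict_incr.
    - intros a b. now apply exp_neg_obj_strict_decr. }
  assert (hopt : 0 < exp_neg_obj c theta T tauopt).
  { apply exp_neg_obj_pos in hnonempty.
    destruct (hpeak taumax (Rle_refl _)) as [<- | hlt]; lra. }
  assert (hfeas : feasible c theta T taumax tauopt).
  { pose proof (tau_tilde_pos c theta T hc htheta (Rlt_le _ _ hT)).
    split; [apply Rmin_glb; lra |].
    split; [apply Rmin_l | now apply exp_neg_obj_pos]. }
  split; [exact hfeas | split].
  - intros tau [_ [hle hdom]].
    destruct (hpeak tau hle) as [-> | hlt]; [lra |].
    apply Rlt_le, obj_lt_of_exp_neg_obj_lt; [assumption | now apply exp_neg_obj_pos | assumption].
  - intros tau [_ [hle hdom]] hobj.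
    destruct (hpeak tau hle) as [-> | hlt]; [reflexivity | exfalso].
    apply exp_neg_obj_pos in hdom.
    pose proof (obj_lt_of_exp_neg_obj_lt c theta T tau tauopt htheta hdom hlt). lra.
Qed.
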